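(* Let $D\ge1$, $\beta>0$, $c:\{0,\ldots,D\}\to\mathbb{R}$. If $T_N$ is a random plane tree distributed according to $P_N$ on $\mathbb{T}_N(D)$, then $\left(\frac{\chi_0(T_N)}{N},\frac{\chi_1(T_N)}{N},\ldots,\frac{\chi_D(T_N)}{N}\right)\to p^*$ in probability as $N\to\infty$.
   Context: A plane (ordered) tree is a rooted tree in which the children of each vertex are linearly ordered. $\mathbb{T}_N(D)$ is the set of plane trees on $N$ vertices in which every vertex has at most $D$ children; $\chi_k(T)$ is the number of vertices of $T$ with exactly $k$ children. $H(T)=\sum_{k=0}^D c(k)\chi_k(T)$, $P_N\{T\}=e^{-\beta H(T)}/\sum_{T'\in\mathbb{T}_N(D)}e^{-\beta H(T')}$. $\mathcal{M}=\{p\in[0,1]^{D+1}:\ \sum_{k=0}^D p_k=1,\ \sum_{k=0}^D kp_k=1\}$, $J(p)=\sum_{k=0}^D p_k\ln p_k+\beta\sum_{k=0}^D p_kc(k)$ (with $0\ln0=0$), and $p^*$ is the unique minimizer of $J$ on $\mathcal{M}$. *)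

From Stdlib Require Import Reals List Arith.
Open Scope R_scope.

Inductive tree : Type := Node : list tree -> tree.

Fixpoint tsize (t : tree) : nat :=
  match t with
  | Node ts => S ((fix go (l : list tree) : nat :=
                     match l with nil => 0%nat | u :: l' => (tsize u + go l')%nat end) ts)
  end.

Fixpoint chi (k : nat) (t : tree) : nat :=
  match t with
  | Node ts => ((if Nat.eqb (length ts) k then 1 else 0) +
               (fix go (l : list tree) : nat :=
                  match l with nil => 0%nat | u :: l' => (chi k u + go l')%nat end) ts)%nat
  end.

Fixpoint max_children_le (D : nat) (t : tree) : Prop :=
  match t with
  | Node ts => (length ts <= D)%nat /\
               (fix go (l : list tree) : Prop :=
                  match l with nil => True | u :: l' => max_children_le D u /\ go l' end) ts
  end.

Definition in_TND (D N : nat) (t : tree) : Prop :=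
  tsize t = N /\ max_children_le D t.

Definition enumerates (D N : nat) (l : list tree) : Prop :=
  NoDup l /\ forall t, In t l <-> in_TND D N t.

Definition Ham (D : nat) (c : nat -> R) (t : tree) : R :=
  sum_f_R0 (fun k => c k * INR (chi k t)) D.

Definition weight (D : nat) (c : nat -> R) (beta : R) (t : tree) : R :=
  exp (- beta * Ham D c t).

Definition sumR (f : tree -> R) (l : list tree) : R :=
  fold_right (fun t acc => f t + acc) 0 l.

Definition gibbs_prob (D : nat) (c : nat -> R) (beta : R) (l : list tree)
  (E : tree -> bool) : R :=
  sumR (fun t => if E t then weight D c beta t else 0) l / sumR (weight D c beta) l.

Definition deviation (D N : nat) (p : nat -> R) (t : tree) : R :=
  fold_right Rmax 0 (map (fun k => Rabs (INR (chi k t) / INR N - p k)) (seq 0 (S D))).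

Definition Rgtb (x y : R) : bool := if Rgt_dec x y then true else false.

Definition in_M (D : nat) (p : nat -> R) : Prop :=
  (forall k, (k <= D)%nat -> 0 <= p k <= 1) /\
  sum_f_R0 p D = 1 /\
  sum_f_R0 (fun k => INR k * p k) D = 1.

Definition xlnx (x : R) : R := if Req_EM_T x 0 then 0 else x * ln x.

Definition J (D : nat) (c : nat -> R) (beta : R) (p : nat -> R) : R :=
  sum_f_R0 (fun k => xlnx (p k)) D + beta * sum_f_R0 (fun k => p k * c k) D.

Definition is_minimizer_J (D : nat) (c : nat -> R) (beta : R) (p : nat -> R) : Prop :=
  in_M D p /\ forall q, in_M D q -> J D c beta p <= J D c beta q.

From Stdlib Require Import Reals List Arith Lia Lra Ranalysis_reg.
Open Scope R_scope.

(** A plane tree is encoded by its Łukasiewicz word, the list of out-degrees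
    in preorder: the encoding is injective, has one letter per vertex, the
    letter [k] occurs [chi_k] times, and every word satisfying the Łukasiewicz
    condition encodes a tree.  For [D >= 2] the minimiser [p*] of [J] on [M]
    is an exponentially tilted law [p*_k = exp (a + b k - beta c k)] (tilting
    and the Gibbs inequality), so on [T_N(D)] the Gibbs weight is a constant
    times the product weight [prod_i p*(w_i)] of the encoding: [P_N] is the
    law of [N] i.i.d. [p*]-letters conditioned to encode a tree.  Hence
    [P_N (deviation > eps) = A_N / B_N] where
    - [A_N], the mass of deviating trees, is at most the mass of all words
      of length [N] with deviating letter frequencies, [<= 2 (D+1) e^(-rN)]
      by a Chernoff bound;
    - [B_N], the mass of all trees, decays subexponentially: a word of
      length [L] whose walk from height [K+1] stays positive and ends below
      [3K] is padded into a tree word of length [N = L + 4K], such words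
      carry mass [>= 1/2] (first-passage and Chernoff bounds, using that the
      steps [k - 1] are centred under [p*]), and padding costs at most
      [pi^(4K)] with [pi = min (p*_0, p*_1, p*_2)] and [K = N/m], [m] large.
    The case [D = 1] is degenerate: [T_N(1)] only contains the path. *)

Definition sumL {A : Type} (l : list A) (G : A -> R) : R :=
  fold_right (fun u acc => G u + acc) 0 l.

Notation alphabet D := (seq 0 (S D)).

Section ListSums.
Context {A : Type}.
Implicit Types (l : list A) (G : A -> R).

Lemma sumL_app l1 l2 G : sumL (l1 ++ l2) G = sumL l1 G + sumL l2 G.
Proof. induction l1; simpl; [ring | rewrite IHl1; ring]. Qed.

Lemma sumL_map {B} (f : B -> A) (l : list B) G :
  sumL (map f l) G = sumL l (fun x => G (f x)).
Proof. induction l; simpl; [ring | rewrite IHl; ring]. Qed.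

Lemma sumL_ext l G1 G2 :
  (forall x, In x l -> G1 x = G2 x) -> sumL l G1 = sumL l G2.
Proof. induction l; simpl; intros H; [ring|]. rewrite H, IHl; auto. Qed.

Lemma sumL_le l G1 G2 :
  (forall x, In x l -> G1 x <= G2 x) -> sumL l G1 <= sumL l G2.
Proof. induction l; simpl; intros H; [lra|]. apply Rplus_le_compat; auto. Qed.

Lemma sumL_nonneg l G : (forall x, In x l -> 0 <= G x) -> 0 <= sumL l G.
Proof. induction l; simpl; intros H; [lra|]. apply Rplus_le_le_0_compat; auto. Qed.

Lemma sumL_plus l G1 G2 :
  sumL l (fun x => G1 x + G2 x) = sumL l G1 + sumL l G2.
Proof. induction l; simpl; [ring | rewrite IHl; ring]. Qed.

Lemma sumL_minus l G1 G2 :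
  sumL l (fun x => G1 x - G2 x) = sumL l G1 - sumL l G2.
Proof. induction l; simpl; [ring | rewrite IHl; ring]. Qed.

Lemma sumL_scal l a G : sumL l (fun x => a * G x) = a * sumL l G.
Proof. induction l; simpl; [ring | rewrite IHl; ring]. Qed.

Lemma sumL_zero l : sumL l (fun _ => 0) = 0.
Proof. induction l; simpl; [ring | rewrite IHl; ring]. Qed.

Lemma sumL_one l : sumL l (fun _ => 1) = INR (length l).
Proof.
  induction l as [|x l IH]; [reflexivity|].
  rewrite length_cons, S_INR, <- IH. simpl. ring.
Qed.

Lemma sumL_filter (f : A -> bool) l G :
  sumL (filter f l) G = sumL l (fun u => if f u then G u else 0).
Proof. induction l; simpl; [ring|]. destruct (f a); simpl; rewrite IHl; ring. Qed.

Lemma sumL_term_le l G x :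
  In x l -> (forall y, In y l -> 0 <= G y) -> G x <= sumL l G.
Proof.
  induction l; simpl; intros Hx Hp; [contradiction|].
  assert (0 <= G a) by auto. assert (0 <= sumL l G) by (apply sumL_nonneg; auto).
  destruct Hx as [<-|Hx]; [lra|]. assert (G x <= sumL l G) by auto. lra.
Qed.

Lemma sumL_zero_each l G :
  (forall x, In x l -> 0 <= G x) -> sumL l G <= 0 -> forall x, In x l -> G x = 0.
Proof.
  intros Hp Hs x Hx. assert (Hle := sumL_term_le l G x Hx Hp).
  assert (0 <= G x) by auto. lra.
Qed.

Lemma sumL_incl_le l1 l2 G :
  NoDup l1 -> incl l1 l2 -> (forall x, In x l2 -> 0 <= G x) ->
  sumL l1 G <= sumL l2 G.
Proof.
  revert l2; induction l1 as [|a l1 IH]; intros l2 Hnd Hincl Hpos; simpl.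
  - apply sumL_nonneg; auto.
  - inversion Hnd as [|? ? Ha_l1 Hnd1]; subst.
    destruct (in_split a l2 (Hincl a (in_eq a l1))) as [l3 [l4 ->]].
    assert (Hrest : sumL l1 G <= sumL (l3 ++ l4) G).
    { apply IH; auto.
      - intros x Hx. assert (Hx' := Hincl x (in_cons a x l1 Hx)).
        apply in_app_or in Hx'. apply in_or_app. destruct Hx' as [H|[H|H]]; auto.
        subst; contradiction.
      - intros x Hx. apply Hpos. apply in_app_or in Hx; apply in_or_app; simpl; tauto. }
    rewrite sumL_app in *. simpl. lra.
Qed.
End ListSums.

Lemma sumL_swap {A B} (l : list A) (m : list B) F :
  sumL l (fun s => sumL m (fun k => F s k)) = sumL m (fun k => sumL l (fun s => F s k)).
Proof.
  induction l; simpl.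
  - symmetry. apply sumL_zero.
  - rewrite IHl, <- sumL_plus. reflexivity.
Qed.

Lemma sum_f_R0_sumL g D : sum_f_R0 g D = sumL (alphabet D) g.
Proof.
  induction D; [simpl; ring|].
  simpl sum_f_R0. rewrite IHD, (seq_S (S D) 0), sumL_app. simpl. ring.
Qed.

Fixpoint words (D n : nat) : list (list nat) :=
  match n with
  | O => nil :: nil
  | S n' => flat_map (fun x => map (cons x) (words D n')) (alphabet D)
  end.

Definition wprob (p : nat -> R) (w : list nat) : R :=
  fold_right (fun x acc => p x * acc) 1 w.

Definition isprob (D : nat) (p : nat -> R) : Prop :=
  (forall x, (x <= D)%nat -> 0 <= p x) /\ sumL (alphabet D) p = 1.

Notation letters_le D w := (Forall (fun x => x <= D)%nat w).

Lemma sumL_words_succ D n G :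
  sumL (words D (S n)) G = sumL (alphabet D) (fun x => sumL (words D n) (fun u => G (x :: u))).
Proof.
  change (words D (S n)) with (flat_map (fun x => map (cons x) (words D n)) (alphabet D)).
  induction (alphabet D) as [|x l IH]; simpl; [reflexivity|].
  rewrite sumL_app, sumL_map, IH. reflexivity.
Qed.

Lemma sumL_wprob D n q : sumL (words D n) (wprob q) = (sumL (alphabet D) q) ^ n.
Proof.
  induction n; [simpl; ring|].
  rewrite sumL_words_succ, <- tech_pow_Rmult, Rmult_comm, <- sumL_scal.
  apply sumL_ext. intros x _. rewrite <- IHn, Rmult_comm, <- sumL_scal. reflexivity.
Qed.

Lemma In_words D n u : In u (words D n) <-> length u = n /\ letters_le D u.
Proof.
  revert u; induction n; intros u.
  - simpl. split; [intros [<-|[]]; auto|].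
    intros [H _]. destruct u; [auto|discriminate].
  - change (words D (S n)) with (flat_map (fun x => map (cons x) (words D n)) (alphabet D)).
    rewrite in_flat_map. split.
    + intros [x [Hx Hu]]. apply in_map_iff in Hu. destruct Hu as [u' [<- Hu']].
      apply IHn in Hu' as [? ?]. apply in_seq in Hx. simpl. split; [lia|].
      constructor; [lia|auto].
    + intros [Hl HF]. destruct u as [|x u']; [discriminate|].
      inversion HF; subst. exists x. split; [apply in_seq; lia|].
      apply in_map, IHn. auto.
Qed.

Lemma NoDup_words D n : NoDup (words D n).
Proof.
  induction n; [repeat constructor; simpl; tauto|].
  change (words D (S n)) with (flat_map (fun x => map (cons x) (words D n)) (alphabet D)).
  generalize (seq_NoDup (S D) 0). induction (alphabet D) as [|x l IH]; simpl; intros Hl.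
  - constructor.
  - inversion Hl; subst. apply NoDup_app.
    + apply NoDup_map_NoDup_ForallPairs; auto. intros u v _ _ H; injection H; auto.
    + auto.
    + intros w Hw Hw2. apply in_map_iff in Hw. destruct Hw as [u [<- _]].
      apply in_flat_map in Hw2. destruct Hw2 as [y [Hy Hy2]]. apply in_map_iff in Hy2.
      destruct Hy2 as [v [Hv _]]. injection Hv; intros; subst. auto.
Qed.

Lemma wprob_app p w1 w2 : wprob p (w1 ++ w2) = wprob p w1 * wprob p w2.
Proof. induction w1; simpl; [ring|]. unfold wprob in *; simpl. rewrite IHw1; ring. Qed.

Lemma wprob_repeat p x n : wprob p (repeat x n) = p x ^ n.
Proof. induction n; simpl; [reflexivity|]. unfold wprob in *; simpl. rewrite IHn; auto. Qed.

Lemma wprob_nonneg D p u : isprob D p -> letters_le D u -> 0 <= wprob p u.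
Proof.
  intros Hp HF. induction HF; simpl; [lra|].
  apply Rmult_le_pos; auto. apply (proj1 Hp); auto.
Qed.

Lemma isprob_le1 D p k : isprob D p -> (k <= D)%nat -> p k <= 1.
Proof.
  intros [Hp0 Hps] Hk. rewrite <- Hps.
  apply sumL_term_le; [apply in_seq; lia|]. intros x Hx; apply in_seq in Hx; apply Hp0; lia.
Qed.

Lemma words_total_mass D p n : isprob D p -> sumL (words D n) (wprob p) = 1.
Proof. intros Hp. rewrite sumL_wprob, (proj2 Hp). apply pow1. Qed.

(** * The Łukasiewicz encoding of plane trees *)

Definition tree_ind2 (P : tree -> Prop) (HP : forall ts, Forall P ts -> P (Node ts)) :
  forall t, P t :=
  fix F (t : tree) : P t :=
  match t with
  | Node ts => HP ts ((fix go (l : list tree) : Forall P l :=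
                        match l with
                        | nil => Forall_nil _
                        | u :: l' => Forall_cons _ (F u) (go l')
                        end) ts)
  end.

Fixpoint enc (t : tree) : list nat :=
  match t with
  | Node ts => length ts :: (fix go (l : list tree) : list nat :=
                  match l with nil => nil | u :: l' => enc u ++ go l' end) ts
  end.

Definition encF (ts : list tree) : list nat := concat (map enc ts).

Notation occ w k := (count_occ Nat.eq_dec w k).

Lemma enc_Node ts : enc (Node ts) = length ts :: encF ts.
Proof. simpl. f_equal. induction ts; simpl; auto. rewrite IHts. reflexivity. Qed.

Lemma encF_cons t ts : encF (t :: ts) = enc t ++ encF ts.
Proof. reflexivity. Qed.

Lemma encF_app ts1 ts2 : encF (ts1 ++ ts2) = encF ts1 ++ encF ts2.
Proof. unfold encF. rewrite map_app, concat_app. reflexivity. Qed.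

Lemma occ_cons x w k : occ (x :: w) k = ((if Nat.eqb x k then 1 else 0) + occ w k)%nat.
Proof.
  simpl. destruct (Nat.eq_dec x k) as [E|E]; destruct (Nat.eqb_spec x k); lia.
Qed.

Lemma tsize_enc t : tsize t = length (enc t).
Proof.
  induction t using tree_ind2. rewrite enc_Node. simpl. f_equal.
  induction H; simpl; auto. rewrite encF_cons, length_app. lia.
Qed.

Lemma chi_enc k t : chi k t = occ (enc t) k.
Proof.
  induction t using tree_ind2. rewrite enc_Node, occ_cons. simpl. f_equal.
  induction H; simpl; auto. rewrite encF_cons, count_occ_app. lia.
Qed.

Lemma max_children_Node D ts :
  max_children_le D (Node ts) <-> (length ts <= D)%nat /\ Forall (max_children_le D) ts.
Proof.
  simpl. apply and_iff_compat_l. induction ts; simpl; [split; auto|].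
  rewrite IHts. split; [intros [H1 H2]; constructor; auto | intros H; inversion H; auto].
Qed.

Lemma max_children_enc D t : max_children_le D t <-> letters_le D (enc t).
Proof.
  induction t using tree_ind2. rewrite max_children_Node, enc_Node.
  assert (Forall (max_children_le D) ts <-> letters_le D (encF ts)).
  { induction H; simpl; [split; constructor|].
    rewrite encF_cons, Forall_app. split.
    - intros Hf; inversion Hf; subst. split; [apply H; auto | apply IHForall; auto].
    - intros [H1 H2]. constructor; [apply H; auto | apply IHForall; auto]. }
  rewrite H0. split; [intros [? ?]; constructor; auto | intros Hf; inversion Hf; auto].
Qed.

(** A tree has one edge fewer than vertices: the letters sum to [length - 1]. *)
Lemma list_sum_enc t : (list_sum (enc t) + 1 = length (enc t))%nat.
Proof.
  induction t using tree_ind2. rewrite enc_Node. simpl.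
  assert (list_sum (encF ts) + length ts = length (encF ts))%nat.
  { induction H; simpl; auto. rewrite encF_cons, list_sum_app, length_app. lia. }
  lia.
Qed.

Lemma enc_prefix_free t1 : forall t2 r1 r2,
  enc t1 ++ r1 = enc t2 ++ r2 -> t1 = t2 /\ r1 = r2.
Proof.
  induction t1 as [ts1 IH] using tree_ind2. intros [ts2] r1 r2 He.
  rewrite !enc_Node in He. simpl in He. injection He as Hl He.
  assert (Hforest : forall ts2 r1 r2, length ts1 = length ts2 ->
            encF ts1 ++ r1 = encF ts2 ++ r2 -> ts1 = ts2 /\ r1 = r2).
  { clear -IH. induction IH; intros ts2 r1 r2 Hl He.
    - destruct ts2; [auto | discriminate].
    - destruct ts2 as [|y ts2]; [discriminate|].
      rewrite !encF_cons, <- !app_assoc in He. apply H in He as [-> He].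
      apply IHIH in He as [-> ->]; [auto | simpl in Hl; lia]. }
  apply Hforest in He as [-> ->]; auto.
Qed.

Lemma enc_inj t1 t2 : enc t1 = enc t2 -> t1 = t2.
Proof. intros H. apply (enc_prefix_free t1 t2 nil nil). rewrite !app_nil_r. auto. Qed.

(** The Łukasiewicz condition: reading [w] with [k] pending subtrees, each
    letter [x] consumes one pending subtree and opens [x] new ones, the count
    stays positive before each letter and reaches zero exactly at the end. *)
Fixpoint lk (k : nat) (w : list nat) : Prop :=
  match w with nil => k = 0%nat | x :: w' => (0 < k)%nat /\ lk (k - 1 + x) w' end.

Lemma lk_forest w : forall k, lk k w -> exists ts, length ts = k /\ encF ts = w.
Proof.
  induction w as [|x w IH]; intros k Hk; simpl in Hk.
  - subst. exists nil. auto.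
  - destruct Hk as [Hk Hw]. apply IH in Hw as [ts [Hl He]].
    exists (Node (firstn x ts) :: skipn x ts). split.
    + simpl. rewrite length_skipn. lia.
    + rewrite encF_cons, enc_Node. simpl. rewrite length_firstn, <- He.
      replace (Nat.min x (length ts)) with x by lia.
      rewrite <- encF_app, firstn_skipn. reflexivity.
Qed.

Lemma lk_tree w : lk 1 w -> exists t, enc t = w.
Proof.
  intros H. apply lk_forest in H as [[|t [|]] [Hl He]]; simpl in Hl; try lia.
  exists t. rewrite <- He. unfold encF. simpl. rewrite app_nil_r. reflexivity.
Qed.

(** * The minimiser of J is an exponentially tilted law

    For [D >= 2] we find [b] such that the tilted weights
    [exp (b k - beta c k)] have mean one after normalisation, and the Gibbs
    inequality shows that the normalised tilted law is the only minimiser. *)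

Lemma exp_le_mono x y : x <= y -> exp x <= exp y.
Proof. intros H. destruct (Req_dec x y); [subst; lra | left; apply exp_increasing; lra]. Qed.

Definition tilted_mean (D : nat) (beta : R) (c : nat -> R) (b : R) : R :=
  sumL (alphabet D) (fun k => (INR k - 1) * exp (b * INR k - beta * c k)).

Lemma tilted_mean_cont D beta c : continuity (tilted_mean D beta c).
Proof.
  unfold tilted_mean. induction (alphabet D) as [|k l IH]; simpl.
  - apply continuity_const. intros x y; reflexivity.
  - apply (continuity_plus (fun b => (INR k - 1) * exp (b * INR k - beta * c k))); auto. reg.
Qed.

Section Tilting.
Variables (D : nat) (beta : R) (c : nat -> R).
Hypothesis HD : (2 <= D)%nat.

Let w k := exp (- beta * c k).

Lemma tilted_term b k : exp (b * INR k - beta * c k) = exp (b * INR k) * w k.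
Proof. unfold w. rewrite <- exp_plus. f_equal. ring. Qed.

Lemma tilted_mean_split b :
  tilted_mean D beta c b =
  - w 0%nat + sumL (seq 1 D) (fun k => (INR k - 1) * exp (b * INR k - beta * c k)).
Proof.
  unfold tilted_mean. change (alphabet D) with (0%nat :: seq 1 D).
  change (sumL (0%nat :: seq 1 D) ?g) with (g 0%nat + sumL (seq 1 D) g). cbv beta.
  rewrite tilted_term. simpl INR. rewrite Rmult_0_r, exp_0. ring.
Qed.

Lemma tail_term_nonneg b k : In k (seq 1 D) -> 0 <= (INR k - 1) * exp (b * INR k - beta * c k).
Proof.
  intros Hk. apply in_seq in Hk. assert (1 <= INR k) by (apply (le_INR 1); lia).
  apply Rmult_le_pos; [lra | left; apply exp_pos].
Qed.

Lemma tilted_mean_neg : exists b, tilted_mean D beta c b < 0.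
Proof.
  set (W := sumL (seq 1 D) (fun k => (INR k - 1) * w k)).
  assert (HW : 0 <= W).
  { apply sumL_nonneg. intros k Hk. assert (H := tail_term_nonneg 0 k Hk).
    rewrite tilted_term, Rmult_0_l, exp_0, Rmult_1_l in H. exact H. }
  assert (Hw0 : 0 < w 0%nat) by apply exp_pos.
  set (b := - (W / w 0%nat)).
  assert (Hb : b <= 0) by (unfold b, Rdiv; assert (H := Rle_mult_inv_pos W _ HW Hw0); lra).
  exists b. rewrite tilted_mean_split.
  assert (Htail : sumL (seq 1 D) (fun k => (INR k - 1) * exp (b * INR k - beta * c k))
                  <= exp (2 * b) * W).
  { unfold W. rewrite <- sumL_scal. apply sumL_le. intros k Hk. apply in_seq in Hk.
    rewrite tilted_term. assert (0 < w k) by apply exp_pos.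
    destruct (Nat.eq_dec k 1) as [->|Hk1]; [simpl; lra|].
    assert (2 <= INR k) by (apply (le_INR 2); lia).
    assert (exp (b * INR k) <= exp (2 * b)) by (apply exp_le_mono; nra).
    assert (0 <= (INR k - 1) * w k) by nra. nra. }
  assert (Hexp : W < w 0%nat * exp (- (2 * b))).
  { assert (H := exp_ineq1_le (- (2 * b))).
    assert (w 0%nat * (1 + - (2 * b)) = w 0%nat + 2 * W) by (unfold b; field; lra). nra. }
  assert (exp (2 * b) * W < w 0%nat).
  { assert (E : exp (2 * b) * exp (- (2 * b)) = 1)
      by (rewrite <- exp_plus, Rplus_opp_r; apply exp_0).
    apply (Rmult_lt_compat_l (exp (2 * b))) in Hexp; [|apply exp_pos].
    replace (exp (2 * b) * (w 0%nat * exp (- (2 * b)))) with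
      (w 0%nat * (exp (2 * b) * exp (- (2 * b)))) in Hexp by ring.
    rewrite E in Hexp. lra. }
  lra.
Qed.

Lemma tilted_mean_pos b1 : exists b, b1 < b /\ 0 < tilted_mean D beta c b.
Proof.
  assert (Hw0 : 0 < w 0%nat) by apply exp_pos.
  assert (Hw2 : 0 < w 2%nat) by apply exp_pos.
  set (b := Rmax (b1 + 1) (w 0%nat / w 2%nat)).
  exists b. split; [assert (b1 + 1 <= b) by apply Rmax_l; lra|].
  rewrite tilted_mean_split.
  assert (H2 : In 2%nat (seq 1 D)) by (apply in_seq; lia).
  apply (fun H => sumL_term_le _ _ _ H (tail_term_nonneg b)) in H2.
  rewrite tilted_term in H2. simpl INR in H2.
  assert (Hb : w 0%nat / w 2%nat <= b) by apply Rmax_r.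
  assert (w 0%nat <= b * w 2%nat)
    by (apply (Rmult_le_compat_r (w 2%nat)) in Hb; [|lra]; unfold Rdiv in Hb;
        rewrite Rmult_assoc, Rinv_l, Rmult_1_r in Hb by lra; lra).
  assert (Hexp := exp_ineq1_le (b * (1 + 1))). nra.
Qed.

Lemma tilt_exists : exists b, tilted_mean D beta c b = 0.
Proof.
  destruct tilted_mean_neg as [b1 Hb1]. destruct (tilted_mean_pos b1) as [b2 [Hlt Hb2]].
  destruct (IVT _ b1 b2 (tilted_mean_cont D beta c) Hlt Hb1 Hb2) as [b [_ Hb]].
  eauto.
Qed.
End Tilting.

Lemma ln_strict y : 0 < y -> y <> 1 -> ln y < y - 1.
Proof.
  intros Hy Hne. assert (ln y <> 0).
  { intros H. apply Hne. rewrite <- (exp_ln y Hy), H. apply exp_0. }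
  apply exp_ineq1 in H. rewrite exp_ln in H; lra.
Qed.

Lemma gibbs_term_eq_or_pos q p :
  0 <= q -> 0 < p -> q = p \/ 0 < xlnx q - q * ln p - q + p.
Proof.
  intros Hq Hp. unfold xlnx. destruct (Req_EM_T q 0) as [->|Hq0]; [right; lra|].
  destruct (Req_dec q p) as [E|E]; [left; auto | right].
  assert (Hqp : 0 < p / q) by (apply Rdiv_lt_0_compat; lra).
  assert (Hne : p / q <> 1).
  { intros H. apply E. unfold Rdiv in H. apply (Rmult_eq_compat_r q) in H.
    rewrite Rmult_assoc, Rinv_l in H by lra. lra. }
  assert (H := ln_strict _ Hqp Hne).
  unfold Rdiv in H. rewrite ln_mult, ln_Rinv in H by (try apply Rinv_0_lt_compat; lra).
  assert (q * (ln p + - ln q) < q * (p * / q - 1)) by (apply Rmult_lt_compat_l; lra).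
  replace (q * (p * / q - 1)) with (p - q) in H0 by (field; lra). lra.
Qed.

Lemma gibbs_term q p : 0 <= q -> 0 < p -> 0 <= xlnx q - q * ln p - q + p.
Proof.
  intros Hq Hp. destruct (gibbs_term_eq_or_pos q p Hq Hp) as [->|H]; [|lra].
  unfold xlnx. destruct (Req_EM_T p 0); lra.
Qed.

Section ExponentialLaw.
Variables (D : nat) (beta a b : R) (c : nat -> R).
Let p k := exp (a + b * INR k - beta * c k).
Hypothesis Hsum : sumL (alphabet D) p = 1.

(** For [q] in [M], [J q] is the relative entropy of [q] w.r.t. the
    exponential law [p], up to the constant [a + b]. *)
Lemma J_relative_entropy q : in_M D q ->
  J D c beta q = sumL (alphabet D) (fun k => xlnx (q k) - q k * ln (p k) - q k + p k) + (a + b).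
Proof.
  intros [_ [Hq2 Hq3]]. unfold J. rewrite !sum_f_R0_sumL in *.
  rewrite !sumL_plus, !sumL_minus, Hsum, Hq2.
  rewrite (sumL_ext _ (fun k => q k * ln (p k))
             (fun k => a * q k + b * (INR k * q k) - beta * (q k * c k)))
    by (intros; unfold p; rewrite ln_exp; ring).
  rewrite sumL_minus, sumL_plus, !sumL_scal, Hq2, Hq3. ring.
Qed.

Lemma exponential_minimiser_unique q :
  in_M D p -> is_minimizer_J D c beta q -> forall k, (k <= D)%nat -> q k = p k.
Proof.
  intros HpM [HqM Hmin] k Hk.
  assert (Hp0 : forall k, 0 < p k) by (intros; apply exp_pos).
  assert (Hq0 : forall k, (k <= D)%nat -> 0 <= q k) by (intros; apply (proj1 HqM); auto).
  assert (HJp : J D c beta p = a + b).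
  { rewrite J_relative_entropy by auto. rewrite (sumL_ext _ _ (fun _ => 0)); [rewrite sumL_zero; ring|].
    intros j _. unfold xlnx. destruct (Req_EM_T (p j) 0) as [E|_]; [specialize (Hp0 j); lra | ring]. }
  assert (Hzero := Hmin p HpM). rewrite HJp, J_relative_entropy in Hzero by auto.
  assert (Hterm : xlnx (q k) - q k * ln (p k) - q k + p k = 0).
  { apply (sumL_zero_each (alphabet D) (fun k => xlnx (q k) - q k * ln (p k) - q k + p k));
      [| lra | apply in_seq; lia].
    intros j Hj. apply in_seq in Hj. apply gibbs_term; [apply Hq0; lia | auto]. }
  destruct (gibbs_term_eq_or_pos (q k) (p k) (Hq0 k Hk) (Hp0 k)); [auto | lra].
Qed.
End ExponentialLaw.

(** For [D >= 2] the minimiser of [J] on [M] is an exponential law: normalising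
    the tilted weights of [tilt_exists] gives a point of [M] of that form. *)
Lemma minimiser_exponential D beta c pstar : (2 <= D)%nat -> is_minimizer_J D c beta pstar ->
  exists a b, forall k, (k <= D)%nat -> pstar k = exp (a + b * INR k - beta * c k).
Proof.
  intros HD Hmin.
  destruct (tilt_exists D beta c HD) as [b Hb].
  set (e := fun k => exp (b * INR k - beta * c k)).
  set (Z := sumL (alphabet D) e).
  assert (HZ : 0 < Z).
  { apply Rlt_le_trans with (e 0%nat); [apply exp_pos|].
    apply sumL_term_le; [apply in_seq; lia | intros; left; apply exp_pos]. }
  set (p := fun k => exp (- ln Z + b * INR k - beta * c k)).
  assert (Hpe : forall k, p k = / Z * e k).
  { intros k. unfold p, e. replace (- ln Z + b * INR k - beta * c k) with
      (- ln Z + (b * INR k - beta * c k)) by ring.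
    rewrite exp_plus, exp_Ropp, exp_ln; auto. }
  assert (Hsum : sumL (alphabet D) p = 1).
  { rewrite (sumL_ext _ _ _ (fun k _ => Hpe k)), sumL_scal. fold Z. field. lra. }
  assert (Hmean : sumL (alphabet D) (fun k => INR k * p k) = 1).
  { rewrite (sumL_ext _ _ (fun k => p k + / Z * ((INR k - 1) * e k)))
      by (intros; rewrite Hpe; ring).
    rewrite sumL_plus, sumL_scal, Hsum.
    replace (sumL (alphabet D) (fun k => (INR k - 1) * e k)) with 0 by (symmetry; exact Hb).
    ring. }
  assert (HpM : in_M D p).
  { split; [|rewrite !sum_f_R0_sumL; auto].
    intros k Hk. split; [left; apply exp_pos|]. rewrite <- Hsum.
    apply sumL_term_le; [apply in_seq; lia | intros; left; apply exp_pos]. }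
  exists (- ln Z), b. apply (exponential_minimiser_unique D beta (- ln Z) b c Hsum); auto.
Qed.

(** * The Gibbs weight is a product weight on encodings *)

Lemma sumL_indicator (l : list nat) g x : NoDup l -> In x l ->
  sumL l (fun k => g k * (if Nat.eqb x k then 1 else 0)) = g x.
Proof.
  induction l as [|a l IH]; intros Hnd Hx; [contradiction|].
  inversion Hnd as [|? ? Ha Hl]; subst. simpl.
  destruct (Nat.eqb_spec x a) as [->|Hxa].
  - rewrite (sumL_ext _ _ (fun _ => 0)), sumL_zero; [ring|].
    intros k Hk. destruct (Nat.eqb_spec a k); [subst; contradiction | ring].
  - destruct Hx as [->|Hx]; [contradiction|]. rewrite IH; auto. ring.
Qed.

Lemma sumL_occ D g w : letters_le D w ->
  sumL (alphabet D) (fun k => g k * INR (occ w k)) = sumL w g.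
Proof.
  induction 1 as [|x w Hx _ IH].
  - rewrite (sumL_ext _ _ (fun _ => 0)) by (intros; simpl; ring). apply sumL_zero.
  - change (sumL (x :: w) g) with (g x + sumL w g).
    rewrite (sumL_ext _ _ (fun k => g k * (if Nat.eqb x k then 1 else 0) + g k * INR (occ w k))).
    + rewrite sumL_plus, sumL_indicator, IH; [reflexivity | apply seq_NoDup | apply in_seq; lia].
    + intros k _. rewrite occ_cons, plus_INR. destruct (Nat.eqb x k); simpl; ring.
Qed.

Section ProductWeight.
Variables (D : nat) (a b beta : R) (c p : nat -> R).
Hypothesis Hp : forall k, (k <= D)%nat -> p k = exp (a + b * INR k - beta * c k).

Lemma wprob_exponential w : letters_le D w ->
  wprob p w = exp (a * INR (length w) + b * INR (list_sum w) - beta * sumL w c).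
Proof.
  induction 1 as [|x w Hx _ IH].
  - simpl. rewrite <- exp_0. f_equal. ring.
  - change (wprob p (x :: w)) with (p x * wprob p w).
    change (list_sum (x :: w)) with (x + list_sum w)%nat.
    change (sumL (x :: w) c) with (c x + sumL w c).
    rewrite IH, Hp, <- exp_plus by auto. f_equal.
    rewrite length_cons, S_INR, plus_INR. ring.
Qed.

Lemma weight_factor t : max_children_le D t ->
  weight D c beta t = exp (- (a * INR (tsize t) + b * (INR (tsize t) - 1))) * wprob p (enc t).
Proof.
  intros Ht. apply max_children_enc in Ht.
  rewrite wprob_exponential by auto.
  unfold weight, Ham. rewrite sum_f_R0_sumL.
  rewrite (sumL_ext _ _ (fun k => c k * INR (occ (enc t) k))) by (intros; rewrite chi_enc; auto).
  rewrite sumL_occ, <- exp_plus by auto. f_equal.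
  rewrite tsize_enc, <- (list_sum_enc t), plus_INR. simpl. ring.
Qed.
End ProductWeight.

Lemma exp_quad y : Rabs y <= / 2 -> exp y <= 1 + y + 2 * y ^ 2.
Proof.
  intros Hy. assert (Hy12 : - / 2 <= y <= / 2) by (revert Hy; unfold Rabs; destruct Rcase_abs; lra).
  assert (Hpos : 0 < 1 - y) by lra.
  assert (Hinv : exp y * (1 - y) <= 1).
  { assert (H1 := exp_ineq1_le (- y)).
    assert (E : exp y * exp (- y) = 1) by (rewrite <- exp_plus, Rplus_opp_r; apply exp_0).
    rewrite <- E. apply Rmult_le_compat_l; [left; apply exp_pos | lra]. }
  assert (Hquad : 1 <= (1 + y + 2 * y ^ 2) * (1 - y)).
  { assert (0 <= y ^ 2 * (1 - 2 * y)) by (apply Rmult_le_pos; [apply pow2_ge_0 | lra]). nra. }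
  apply (Rmult_le_reg_r (1 - y)); lra.
Qed.

Lemma exp_INR_mult n x : exp (INR n * x) = exp x ^ n.
Proof.
  induction n; [simpl; rewrite Rmult_0_l; apply exp_0|].
  rewrite S_INR, Rmult_plus_distr_r, Rmult_1_l, exp_plus, IHn. simpl. ring.
Qed.

Lemma mgf_centred D p f B lam :
  isprob D p -> (forall x, (x <= D)%nat -> Rabs (f x) <= B) ->
  sumL (alphabet D) (fun x => p x * f x) = 0 -> Rabs lam * B <= / 2 ->
  sumL (alphabet D) (fun x => p x * exp (lam * f x)) <= exp (2 * lam ^ 2 * B ^ 2).
Proof.
  intros [Hp0 Hp1] Hf Hm Hl.
  apply Rle_trans with
    (sumL (alphabet D) (fun x => p x + lam * (p x * f x) + 2 * lam ^ 2 * (p x * f x ^ 2))).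
  - apply sumL_le. intros x Hx. apply in_seq in Hx.
    assert (Hb := Hf x ltac:(lia)). assert (Hpx := Hp0 x ltac:(lia)).
    assert (Rabs (lam * f x) <= / 2).
    { rewrite Rabs_mult. eapply Rle_trans; [|apply Hl].
      apply Rmult_le_compat_l; [apply Rabs_pos | auto]. }
    apply exp_quad in H.
    assert (p x * exp (lam * f x) <= p x * (1 + lam * f x + 2 * (lam * f x) ^ 2))
      by (apply Rmult_le_compat_l; auto).
    nra.
  - rewrite !sumL_plus, !sumL_scal, Hm, Hp1.
    assert (Hvar : sumL (alphabet D) (fun x => p x * f x ^ 2) <= B ^ 2).
    { apply Rle_trans with (sumL (alphabet D) (fun x => B ^ 2 * p x));
        [| rewrite sumL_scal, Hp1; lra].
      apply sumL_le. intros x Hx. apply in_seq in Hx.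
      assert (Hb := Hf x ltac:(lia)). assert (Hpx := Hp0 x ltac:(lia)).
      assert (f x ^ 2 <= B ^ 2)
        by (rewrite <- pow2_abs; apply pow_incr; split; [apply Rabs_pos | auto]).
      nra. }
    assert (0 <= 2 * lam ^ 2) by (assert (0 <= lam ^ 2) by apply pow2_ge_0; lra).
    assert (2 * lam ^ 2 * sumL (alphabet D) (fun x => p x * f x ^ 2) <= 2 * lam ^ 2 * B ^ 2)
      by (apply Rmult_le_compat_l; auto).
    eapply Rle_trans; [|apply exp_ineq1_le]. lra.
Qed.

Lemma wprob_exp_tilt p f lam u :
  wprob p u * exp (lam * sumL u f) = wprob (fun x => p x * exp (lam * f x)) u.
Proof.
  induction u; simpl; [rewrite Rmult_0_r, exp_0; ring|].
  unfold wprob in *. simpl. rewrite <- IHu, Rmult_plus_distr_l, exp_plus. ring.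
Qed.

Lemma mgf_words D p f B lam n :
  isprob D p -> (forall x, (x <= D)%nat -> Rabs (f x) <= B) ->
  sumL (alphabet D) (fun x => p x * f x) = 0 -> Rabs lam * B <= / 2 ->
  sumL (words D n) (fun u => wprob p u * exp (lam * sumL u f))
  <= exp (INR n * (2 * lam ^ 2 * B ^ 2)).
Proof.
  intros Hp Hf Hm Hl.
  rewrite (sumL_ext _ _ _ (fun u _ => wprob_exp_tilt p f lam u)), sumL_wprob, exp_INR_mult.
  apply pow_incr. split.
  - apply sumL_nonneg. intros x Hx. apply in_seq in Hx.
    apply Rmult_le_pos; [apply (proj1 Hp); lia | left; apply exp_pos].
  - eapply mgf_centred; eauto.
Qed.

Definition word_deviation (D N : nat) (p : nat -> R) (s : list nat) : R :=
  fold_right Rmax 0 (map (fun k => Rabs (INR (occ s k) / INR N - p k)) (alphabet D)).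

Lemma deviation_enc D N p t : deviation D N p t = word_deviation D N p (enc t).
Proof.
  unfold deviation, word_deviation. f_equal. apply map_ext. intros k. rewrite chi_enc. auto.
Qed.

Lemma fold_Rmax_gt {A} (l : list A) h eps : 0 < eps ->
  fold_right Rmax 0 (map h l) > eps -> exists k, In k l /\ h k > eps.
Proof.
  induction l; simpl; intros He H; [lra|].
  unfold Rmax at 1 in H. destruct (Rle_dec (h a) (fold_right Rmax 0 (map h l))).
  - destruct (IHl He H) as [k [Hk Hk2]]. eauto.
  - exists a; auto.
Qed.

Lemma sumL_centred_indicator k p s :
  sumL s (fun x => (if Nat.eqb x k then 1 else 0) - p k) = INR (occ s k) - INR (length s) * p k.
Proof.
  induction s as [|x s IH]; [simpl; ring|].
  change (sumL (x :: s) ?g) with (g x + sumL s g).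
  rewrite IH, occ_cons, plus_INR, length_cons, S_INR. destruct (Nat.eqb x k); simpl; ring.
Qed.

Lemma letter_count_mgf D p k lam N : isprob D p -> (k <= D)%nat -> Rabs lam <= / 2 ->
  sumL (words D N) (fun s => wprob p s * exp (lam * (INR (occ s k) - INR N * p k)))
  <= exp (INR N * (2 * lam ^ 2)).
Proof.
  intros Hp Hk Hl.
  set (f := fun x => (if Nat.eqb x k then 1 else 0) - p k).
  assert (Hf : forall x, (x <= D)%nat -> Rabs (f x) <= 1).
  { intros x Hx. assert (0 <= p k) by (apply (proj1 Hp); lia).
    assert (p k <= 1) by (apply (isprob_le1 D); auto).
    unfold f. destruct (Nat.eqb x k); apply Rabs_le; lra. }
  assert (Hm : sumL (alphabet D) (fun x => p x * f x) = 0).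
  { unfold f. rewrite (sumL_ext _ _ (fun x => p x * (if Nat.eqb k x then 1 else 0) - p k * p x)).
    - rewrite sumL_minus, sumL_indicator, sumL_scal, (proj2 Hp);
        [ring | apply seq_NoDup | apply in_seq; lia].
    - intros x _. rewrite Nat.eqb_sym. ring. }
  replace (2 * lam ^ 2) with (2 * lam ^ 2 * 1 ^ 2) by ring.
  eapply Rle_trans; [|apply (mgf_words D p f 1 lam N Hp Hf Hm); lra].
  apply Req_le, sumL_ext. intros s Hs. apply In_words in Hs as [Hs _].
  unfold f. rewrite sumL_centred_indicator, Hs. reflexivity.
Qed.

Lemma deviation_indicator_le D N p eps lam s : 0 < INR N -> 0 < lam -> 0 < eps ->
  (if Rgtb (word_deviation D N p s) eps then 1 else 0) <=
  sumL (alphabet D) (fun k =>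
    exp (- lam * INR N * eps) * (exp (lam * (INR (occ s k) - INR N * p k)) +
                                 exp (- lam * (INR (occ s k) - INR N * p k)))).
Proof.
  intros HN Hl He.
  assert (Hpos : forall k, 0 <= exp (- lam * INR N * eps) *
      (exp (lam * (INR (occ s k) - INR N * p k)) + exp (- lam * (INR (occ s k) - INR N * p k)))).
  { intros k. apply Rmult_le_pos; [left; apply exp_pos|].
    apply Rplus_le_le_0_compat; left; apply exp_pos. }
  unfold Rgtb. destruct (Rgt_dec (word_deviation D N p s) eps) as [Hgt|_];
    [| apply sumL_nonneg; auto].
  apply fold_Rmax_gt in Hgt as [k [Hk Hgt]]; auto.
  eapply Rle_trans; [|apply (sumL_term_le _ _ k Hk); intros; apply Hpos].
  cbv beta.
  set (d := INR (occ s k) - INR N * p k).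
  assert (Hd : Rabs d > INR N * eps).
  { replace d with (INR N * (INR (occ s k) / INR N - p k)) by (unfold d; field; lra).
    rewrite Rabs_mult, Rabs_pos_eq by lra. apply Rmult_gt_compat_l; auto. }
  rewrite Rmult_plus_distr_l, <- !exp_plus.
  assert (0 < exp (- lam * INR N * eps + lam * d)) by apply exp_pos.
  assert (0 < exp (- lam * INR N * eps + - lam * d)) by apply exp_pos.
  revert Hd. unfold Rabs. destruct (Rcase_abs d); intros Hd.
  - assert (1 <= exp (- lam * INR N * eps + - lam * d)) by (rewrite <- exp_0; apply exp_le_mono; nra).
    lra.
  - assert (1 <= exp (- lam * INR N * eps + lam * d)) by (rewrite <- exp_0; apply exp_le_mono; nra).
    lra.
Qed.

Lemma deviating_words_mass D p eps lam N : isprob D p -> 0 < INR N -> 0 < lam <= / 2 -> 0 < eps ->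
  sumL (words D N) (fun s => if Rgtb (word_deviation D N p s) eps then wprob p s else 0) <=
  INR (S D) * (2 * exp (INR N * (2 * lam ^ 2) - lam * INR N * eps)).
Proof.
  intros Hp HN Hl He.
  eapply Rle_trans.
  { apply sumL_le. intros s Hs. apply In_words in Hs as [_ Hs].
    assert (H := deviation_indicator_le D N p eps lam s HN (proj1 Hl) He).
    apply (Rmult_le_compat_l (wprob p s)) in H; [|apply (wprob_nonneg D); auto].
    replace (wprob p s * (if Rgtb (word_deviation D N p s) eps then 1 else 0)) with
      (if Rgtb (word_deviation D N p s) eps then wprob p s else 0) in H
      by (destruct Rgtb; ring).
    rewrite <- sumL_scal in H. apply H. }
  rewrite sumL_swap.
  replace (INR (S D)) with (sumL (alphabet D) (fun _ => 1)) by (rewrite sumL_one, length_seq; auto).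
  rewrite (Rmult_comm (sumL _ (fun _ => 1))), <- sumL_scal. apply sumL_le. intros k Hk. apply in_seq in Hk.
  rewrite (sumL_ext _ _ (fun s => exp (- lam * INR N * eps) *
             (wprob p s * exp (lam * (INR (occ s k) - INR N * p k)) +
              wprob p s * exp (- lam * (INR (occ s k) - INR N * p k)))))
    by (intros; ring).
  rewrite sumL_scal, sumL_plus.
  assert (C1 := letter_count_mgf D p k lam N Hp ltac:(lia) ltac:(rewrite Rabs_pos_eq; lra)).
  assert (C2 := letter_count_mgf D p k (- lam) N Hp ltac:(lia)
                  ltac:(rewrite Rabs_Ropp, Rabs_pos_eq; lra)).
  replace ((- lam) ^ 2) with (lam ^ 2) in C2 by ring.
  assert (0 < exp (- lam * INR N * eps)) by apply exp_pos.
  replace (exp (INR N * (2 * lam ^ 2) - lam * INR N * eps)) with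
    (exp (- lam * INR N * eps) * exp (INR N * (2 * lam ^ 2)))
    by (rewrite <- exp_plus; f_equal; ring).
  nra.
Qed.

Lemma deviating_words_decay D p eps : isprob D p -> 0 < eps ->
  exists r, 0 < r /\ forall N, (1 <= N)%nat ->
    sumL (words D N) (fun s => if Rgtb (word_deviation D N p s) eps then wprob p s else 0) <=
    2 * INR (S D) * exp (- r * INR N).
Proof.
  intros Hp He.
  set (lam := Rmin eps 1 / 4).
  assert (Hlam : 0 < lam) by (unfold lam; assert (0 < Rmin eps 1) by (apply Rmin_pos; lra); lra).
  assert (Hlam1 : lam <= / 4) by (unfold lam; assert (Rmin eps 1 <= 1) by apply Rmin_r; lra).
  assert (Hlam2 : lam <= eps / 4) by (unfold lam; assert (Rmin eps 1 <= eps) by apply Rmin_l; lra).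
  exists (lam * eps / 2). split; [nra|]. intros N HN.
  assert (HNpos : 0 < INR N) by (apply lt_0_INR; lia).
  eapply Rle_trans; [apply (deviating_words_mass D p eps lam N); auto; lra|].
  assert (exp (INR N * (2 * lam ^ 2) - lam * INR N * eps) <= exp (- (lam * eps / 2) * INR N)).
  { apply exp_le_mono. assert (2 * lam ^ 2 <= lam * eps / 2) by nra. nra. }
  assert (0 <= INR (S D)) by apply pos_INR. nra.
Qed.

(** Encodings of trees in [T_N(D)] are distinct words of length [N], so
    the deviating trees carry at most the mass of the deviating words. *)
Lemma deviating_trees_le_words D p N l eps : enumerates D N l -> isprob D p ->
  sumL l (fun t => if Rgtb (deviation D N p t) eps then wprob p (enc t) else 0) <=
  sumL (words D N) (fun s => if Rgtb (word_deviation D N p s) eps then wprob p s else 0).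
Proof.
  intros [Hnd Hl] Hp.
  rewrite (sumL_ext _ _ (fun t => (fun s => if Rgtb (word_deviation D N p s) eps
                                            then wprob p s else 0) (enc t)))
    by (intros; rewrite deviation_enc; auto).
  rewrite <- (sumL_map enc l (fun s => if Rgtb (word_deviation D N p s) eps then wprob p s else 0)).
  apply sumL_incl_le.
  - apply NoDup_map_NoDup_ForallPairs; auto. intros x y _ _. apply enc_inj.
  - intros s Hs. apply in_map_iff in Hs as [t [<- Ht]]. apply Hl in Ht as [Hs Ht].
    apply In_words. rewrite <- tsize_enc, <- max_children_enc. auto.
  - intros s Hs. apply In_words in Hs. destruct Rgtb; [apply (wprob_nonneg D); tauto | lra].
Qed.

(** * Padding good words into trees

    Read a word as a walk: from height [k] a letter [x] leads to [k - 1 + x].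
    A word [u] is good for [K] if the walk started at [K + 1] stays positive
    and ends at a height [h <= 3 K].  Then [2^K u 1^(3K - h) 0^h] is the
    encoding of a tree with [length u + 4 K] vertices. *)

Fixpoint stays_pos (k : nat) (u : list nat) : bool :=
  match u with nil => Nat.ltb 0 k | x :: u' => Nat.ltb 0 k && stays_pos (k - 1 + x) u' end.

Fixpoint final_height (k : nat) (u : list nat) : nat :=
  match u with nil => k | x :: u' => final_height (k - 1 + x) u' end.

Definition good (K : nat) (u : list nat) : bool :=
  stays_pos (K + 1) u && Nat.leb (final_height (K + 1) u) (3 * K).

Definition pad (K : nat) (u : list nat) : list nat :=
  repeat 2%nat K ++ u ++ repeat 1%nat (3 * K - final_height (K + 1) u)
                     ++ repeat 0%nat (final_height (K + 1) u).

Lemma lk_twos K : forall k w, (0 < k)%nat -> lk (k + K) w -> lk k (repeat 2%nat K ++ w).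
Proof.
  induction K; intros k w Hk H; simpl; [rewrite Nat.add_0_r in H; auto|].
  split; auto. apply IHK; [lia|]. replace (k - 1 + 2 + K)%nat with (k + S K)%nat by lia. auto.
Qed.

Lemma lk_ones n : forall k w, (0 < k)%nat -> lk k w -> lk k (repeat 1%nat n ++ w).
Proof.
  induction n; intros k w Hk H; simpl; auto. split; auto.
  replace (k - 1 + 1)%nat with k by lia. auto.
Qed.

Lemma lk_zeros h : lk h (repeat 0%nat h).
Proof. induction h; simpl; auto. split; [lia|]. rewrite Nat.sub_0_r, Nat.add_0_r. auto. Qed.

Lemma lk_stays_pos k u w : stays_pos k u = true -> lk (final_height k u) w -> lk k (u ++ w).
Proof.
  revert k; induction u as [|x u IH]; intros k H1 H2; simpl in *; auto.
  apply andb_prop in H1 as [H1 H3]. apply Nat.ltb_lt in H1. split; auto.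
Qed.

Lemma final_height_pos k u : stays_pos k u = true -> (0 < final_height k u)%nat.
Proof.
  revert k; induction u; intros k H; simpl in *; [apply Nat.ltb_lt; auto|].
  apply andb_prop in H. apply IHu. tauto.
Qed.

Lemma pad_lk K u : good K u = true -> lk 1 (pad K u).
Proof.
  unfold good, pad. intros H. apply andb_prop in H as [H1 H2].
  apply Nat.leb_le in H2. assert (Hf := final_height_pos _ _ H1).
  apply lk_twos; [lia|]. rewrite Nat.add_comm.
  apply lk_stays_pos; auto. apply lk_ones; auto. apply lk_zeros.
Qed.

Lemma pad_length K u : good K u = true -> length (pad K u) = (length u + 4 * K)%nat.
Proof.
  unfold good, pad. intros H. apply andb_prop in H as [_ H2]. apply Nat.leb_le in H2.
  rewrite !length_app, !repeat_length. lia.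
Qed.

Lemma pad_letters D K u : (2 <= D)%nat -> letters_le D u -> letters_le D (pad K u).
Proof.
  intros HD Hu. unfold pad. repeat (apply Forall_app; split); auto;
  apply Forall_forall; intros x Hx; apply repeat_spec in Hx; lia.
Qed.

Lemma pad_inj K u1 u2 : length u1 = length u2 -> pad K u1 = pad K u2 -> u1 = u2.
Proof.
  unfold pad. intros Hl H. apply app_inv_head in H.
  apply (f_equal (firstn (length u1))) in H.
  rewrite !firstn_app, Nat.sub_diag, Hl, Nat.sub_diag, !firstn_all in H. simpl in H.
  rewrite !app_nil_r in H. rewrite <- Hl, firstn_all in H. auto.
Qed.

Lemma wprob_pad D p pi K u : isprob D p -> letters_le D u -> 0 <= pi ->
  pi <= p 0%nat -> pi <= p 1%nat -> pi <= p 2%nat -> good K u = true ->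
  pi ^ (4 * K) * wprob p u <= wprob p (pad K u).
Proof.
  intros Hp HF Hpi H0 H1 H2 Hok. unfold pad. rewrite !wprob_app, !wprob_repeat.
  unfold good in Hok. apply andb_prop in Hok as [_ Hle]. apply Nat.leb_le in Hle.
  assert (Hu := wprob_nonneg D p u Hp HF).
  set (h := final_height (K + 1) u) in *.
  replace (4 * K)%nat with (K + ((3 * K - h) + h))%nat by lia. rewrite !pow_add.
  assert (Hmono : forall x n, 0 <= pi <= p x -> 0 <= pi ^ n <= p x ^ n)
    by (intros x n Hx; split; [apply pow_le | apply pow_incr]; lra).
  destruct (Hmono 2%nat K) as [A0 A1]; [lra|].
  destruct (Hmono 1%nat (3 * K - h)%nat) as [B0 B1]; [lra|].
  destruct (Hmono 0%nat h) as [C0 C1]; [lra|].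
  replace (pi ^ K * (pi ^ (3 * K - h) * pi ^ h) * wprob p u) with
    (pi ^ K * (wprob p u * (pi ^ (3 * K - h) * pi ^ h))) by ring.
  apply Rmult_le_compat; auto; [apply Rmult_le_pos; auto; apply Rmult_le_pos; auto|].
  apply Rmult_le_compat_l; auto. apply Rmult_le_compat; auto.
Qed.

Lemma partition_lower_bound D p pi N K L l :
  enumerates D N l -> isprob D p -> (2 <= D)%nat -> (L + 4 * K = N)%nat -> 0 <= pi ->
  pi <= p 0%nat -> pi <= p 1%nat -> pi <= p 2%nat ->
  pi ^ (4 * K) * sumL (words D L) (fun u => if good K u then wprob p u else 0) <=
  sumL l (fun t => wprob p (enc t)).
Proof.
  intros [Hnd Hl] Hp HD HN Hpi H0 H1 H2.
  rewrite <- sumL_filter, <- sumL_scal, <- (sumL_map enc l (wprob p)).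
  apply Rle_trans with (sumL (filter (good K) (words D L)) (fun u => wprob p (pad K u))).
  { apply sumL_le. intros u Hu. apply filter_In in Hu as [Hu Hok].
    apply In_words in Hu. apply (wprob_pad D); tauto. }
  rewrite <- (sumL_map (pad K)). apply sumL_incl_le.
  - apply NoDup_map_NoDup_ForallPairs; [|apply NoDup_filter, NoDup_words].
    intros x y Hx Hy. apply filter_In in Hx as [Hx _], Hy as [Hy _].
    apply In_words in Hx as [Hx _], Hy as [Hy _]. apply pad_inj. congruence.
  - intros w Hw. apply in_map_iff in Hw as [u [<- Hu]].
    apply filter_In in Hu as [Hu Hok]. apply In_words in Hu as [Hlen HF].
    destruct (lk_tree _ (pad_lk K u Hok)) as [t Ht].
    apply in_map_iff. exists t. split; auto. apply Hl. split.
    + rewrite tsize_enc, Ht, pad_length by auto. lia.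
    + apply max_children_enc. rewrite Ht. apply pad_letters; auto.
  - intros w Hw. apply in_map_iff in Hw as [t [<- Ht]].
    apply Hl in Ht as [_ Ht]. apply max_children_enc in Ht. apply (wprob_nonneg D); auto.
Qed.

(** * Good words carry most of the mass

    For the centred walk with steps [x - 1], bad words either reach height
    zero (first-passage bound through [hit_sum]) or end above [3 K]
    (Chernoff bound). *)

Fixpoint hit_sum (lam h : R) (u : list nat) : R :=
  match u with
  | nil => exp (- lam * h)
  | x :: u' => exp (- lam * h) + hit_sum lam (h + INR x - 1) u'
  end.

Lemma hit_sum_nonneg lam h u : 0 <= hit_sum lam h u.
Proof.
  revert h; induction u; intros h; simpl; [left; apply exp_pos|].
  apply Rplus_le_le_0_compat; [left; apply exp_pos | auto].
Qed.

(** A walk that reaches height zero contributes a term [exp 0 = 1]. *)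
Lemma hit_sum_ge1 lam u : forall k, stays_pos k u = false -> 1 <= hit_sum lam (INR k) u.
Proof.
  induction u as [|x u IH]; intros k H; simpl in *.
  - destruct k; [|discriminate]. simpl. rewrite Rmult_0_r, exp_0. lra.
  - destruct k as [|k].
    + simpl. rewrite Rmult_0_r, exp_0. assert (H0 := hit_sum_nonneg lam (0 + INR x - 1) u). lra.
    + simpl in H. apply IH in H. rewrite Nat.sub_0_r, plus_INR in H.
      replace (INR (S k) + INR x - 1) with (INR k + INR x) by (rewrite S_INR; ring).
      assert (0 < exp (- lam * INR (S k))) by apply exp_pos. lra.
Qed.

Lemma hit_sum_mean D p lam M n :
  isprob D p -> 1 <= M ->
  sumL (alphabet D) (fun x => p x * exp (- lam * (INR x - 1))) <= M ->
  forall h, sumL (words D n) (fun u => wprob p u * hit_sum lam h u)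
            <= (INR n + 1) * M ^ n * exp (- lam * h).
Proof.
  intros Hp HM HS. induction n; intros h; [simpl; lra|].
  rewrite sumL_words_succ.
  assert (Hn : 0 <= INR n) by apply pos_INR.
  assert (HMn : 1 <= M ^ n) by (apply pow_R1_Rle; auto).
  assert (He : 0 < exp (- lam * h)) by apply exp_pos.
  apply Rle_trans with (sumL (alphabet D) (fun x =>
      exp (- lam * h) * p x +
      (INR n + 1) * M ^ n * exp (- lam * h) * (p x * exp (- lam * (INR x - 1))))).
  - apply sumL_le. intros x Hx. apply in_seq in Hx. assert (Hpx := proj1 Hp x ltac:(lia)).
    change (fun u => wprob p (x :: u) * hit_sum lam h (x :: u)) with
      (fun u => p x * wprob p u * (exp (- lam * h) + hit_sum lam (h + INR x - 1) u)).
    rewrite (sumL_ext _ _ (fun u => p x * exp (- lam * h) * wprob p u +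
                                    p x * (wprob p u * hit_sum lam (h + INR x - 1) u)))
      by (intros; ring).
    rewrite sumL_plus, !sumL_scal, words_total_mass by auto.
    assert (IH := IHn (h + INR x - 1)).
    replace (exp (- lam * (h + INR x - 1))) with (exp (- lam * h) * exp (- lam * (INR x - 1))) in IH
      by (rewrite <- exp_plus; f_equal; ring).
    nra.
  - rewrite sumL_plus, !sumL_scal, (proj2 Hp), S_INR. simpl pow.
    assert ((INR n + 1) * M ^ n * exp (- lam * h) *
              sumL (alphabet D) (fun x => p x * exp (- lam * (INR x - 1))) <=
            (INR n + 1) * M ^ n * exp (- lam * h) * M).
    { apply Rmult_le_compat_l; auto. apply Rmult_le_pos; [|lra]. apply Rmult_le_pos; lra. }
    assert (1 <= M * M ^ n) by (rewrite <- (Rmult_1_l 1); apply Rmult_le_compat; lra).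
    nra.
Qed.

Lemma final_height_sum k u : stays_pos k u = true ->
  INR (final_height k u) = INR k + sumL u (fun x => INR x - 1).
Proof.
  revert k; induction u as [|x u IH]; intros k H; simpl in *; [ring|].
  apply andb_prop in H as [H1 H3]. apply Nat.ltb_lt in H1.
  rewrite IH, plus_INR, minus_INR by (auto; lia). simpl. ring.
Qed.

Section GoodMass.
Variables (D : nat) (p : nat -> R) (K L : nat) (lam : R).
Hypotheses (Hp : isprob D p) (HD : (1 <= D)%nat)
  (Hmean : sumL (alphabet D) (fun x => p x * (INR x - 1)) = 0)
  (Hlam : 0 < lam) (HlamD : lam * INR D <= / 2).

(** A bad word is caught by the hitting sum or by the final-height tilt. *)
Lemma bad_word_le u : letters_le D u ->
  (if good K u then 0 else wprob p u) <=
  wprob p u * hit_sum lam (INR (K + 1)) u +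
  exp (- lam * (2 * INR K)) * (wprob p u * exp (lam * sumL u (fun x => INR x - 1))).
Proof.
  intros HF.
  assert (Hpu := wprob_nonneg D p u Hp HF).
  assert (Hq := hit_sum_nonneg lam (INR (K + 1)) u).
  assert (0 < exp (- lam * (2 * INR K))) by apply exp_pos.
  assert (0 < exp (lam * sumL u (fun x => INR x - 1))) by apply exp_pos.
  assert (0 <= wprob p u * hit_sum lam (INR (K + 1)) u) by (apply Rmult_le_pos; lra).
  assert (0 <= exp (- lam * (2 * INR K)) * (wprob p u * exp (lam * sumL u (fun x => INR x - 1))))
    by (apply Rmult_le_pos; [lra | apply Rmult_le_pos; lra]).
  unfold good. destruct (stays_pos (K + 1) u) eqn:E1; cbn [andb].
  - destruct (Nat.leb_spec (final_height (K + 1) u) (3 * K)) as [_|E2]; [lra|].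
    apply le_INR in E2. rewrite final_height_sum, S_INR, mult_INR, plus_INR in E2 by auto.
    simpl in E2.
    assert (1 <= exp (- lam * (2 * INR K)) * exp (lam * sumL u (fun x => INR x - 1))).
    { rewrite <- exp_plus. apply Rle_trans with (exp 0); [rewrite exp_0; lra|].
      apply exp_le_mono. nra. }
    assert (wprob p u * 1 <= wprob p u *
              (exp (- lam * (2 * INR K)) * exp (lam * sumL u (fun x => INR x - 1))))
      by (apply Rmult_le_compat_l; auto).
    nra.
  - assert (1 <= hit_sum lam (INR (K + 1)) u) by (apply hit_sum_ge1; auto).
    assert (wprob p u * 1 <= wprob p u * hit_sum lam (INR (K + 1)) u)
      by (apply Rmult_le_compat_l; auto).
    nra.
Qed.

Lemma good_mass :
  1 - ((INR L + 1) * exp (INR L * (2 * lam ^ 2 * INR D ^ 2)) * exp (- lam * INR (K + 1)) +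
       exp (- lam * (2 * INR K)) * exp (INR L * (2 * lam ^ 2 * INR D ^ 2)))
  <= sumL (words D L) (fun u => if good K u then wprob p u else 0).
Proof.
  assert (Hf : forall x, (x <= D)%nat -> Rabs (INR x - 1) <= INR D).
  { intros x Hx. apply le_INR in Hx. assert (0 <= INR x) by apply pos_INR.
    assert (1 <= INR D) by (apply (le_INR 1); lia). apply Rabs_le. lra. }
  set (M := exp (2 * lam ^ 2 * INR D ^ 2)).
  assert (HM1 : 1 <= M).
  { unfold M. rewrite <- exp_0. apply exp_le_mono.
    assert (0 <= lam ^ 2) by apply pow2_ge_0. assert (0 <= INR D ^ 2) by apply pow2_ge_0. nra. }
  assert (HS : sumL (alphabet D) (fun x => p x * exp (- lam * (INR x - 1))) <= M).
  { unfold M. replace (lam ^ 2) with ((- lam) ^ 2) by ring.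
    apply (mgf_centred D p (fun x => INR x - 1) (INR D) (- lam)); auto.
    rewrite Rabs_Ropp, Rabs_pos_eq; lra. }
  assert (Hhit := hit_sum_mean D p lam M L Hp HM1 HS (INR (K + 1))).
  assert (Htop := mgf_words D p (fun x => INR x - 1) (INR D) lam L Hp Hf Hmean
                    ltac:(rewrite Rabs_pos_eq; lra)).
  assert (Hsplit : sumL (words D L) (fun u => if good K u then wprob p u else 0) =
                   1 - sumL (words D L) (fun u => if good K u then 0 else wprob p u)).
  { rewrite <- (words_total_mass D p L Hp).
    rewrite (sumL_ext _ (wprob p) (fun u => (if good K u then wprob p u else 0) +
                                            (if good K u then 0 else wprob p u)))
      by (intros; destruct good; ring).
    rewrite sumL_plus. ring. }
  rewrite Hsplit.
  assert (Hbad : sumL (words D L) (fun u => if good K u then 0 else wprob p u) <=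
          (INR L + 1) * M ^ L * exp (- lam * INR (K + 1)) +
          exp (- lam * (2 * INR K)) * exp (INR L * (2 * lam ^ 2 * INR D ^ 2))).
  { eapply Rle_trans; [apply sumL_le; intros u Hu; apply In_words in Hu; apply bad_word_le; tauto|].
    rewrite sumL_plus, sumL_scal. apply Rplus_le_compat; auto.
    apply Rmult_le_compat_l; auto. left; apply exp_pos. }
  unfold M in Hbad. rewrite <- exp_INR_mult in Hbad. lra.
Qed.
End GoodMass.

Lemma exp_sq x : 0 <= x -> x ^ 2 / 4 <= exp x.
Proof.
  intros Hx. replace (exp x) with (exp (x / 2) * exp (x / 2)) by (rewrite <- exp_plus; f_equal; field).
  assert (H := exp_ineq1_le (x / 2)). nra.
Qed.

Lemma linear_exp_small C c0 delta : 0 <= C -> 0 < c0 -> 0 < delta ->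
  exists N0, forall N, (N0 <= N)%nat -> C * (INR N + 2) * exp (- c0 * INR N) < delta.
Proof.
  intros HC Hc Hd.
  destruct (INR_unbounded (12 * C / (c0 ^ 2 * delta))) as [N1 HN1].
  exists (S N1). intros N HN.
  assert (HN' : INR N1 < INR N) by (apply lt_INR; lia).
  assert (H1 : 1 <= INR N) by (apply (le_INR 1); lia).
  assert (Hq : 0 < c0 ^ 2 * delta) by (apply Rmult_lt_0_compat; [apply pow_lt|]; lra).
  assert (HX : 12 * C < INR N * (c0 ^ 2 * delta)).
  { apply (Rmult_lt_compat_r (c0 ^ 2 * delta)) in HN1; auto. unfold Rdiv in HN1.
    rewrite Rmult_assoc, Rinv_l, Rmult_1_r in HN1 by lra. nra. }
  assert (He := exp_sq (c0 * INR N) ltac:(nra)).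
  assert (Hpos : 0 < exp (c0 * INR N)) by apply exp_pos.
  replace (exp (- c0 * INR N)) with (/ exp (c0 * INR N)) by (rewrite <- exp_Ropp; f_equal; ring).
  apply (Rmult_lt_reg_r (exp (c0 * INR N))); auto.
  rewrite Rmult_assoc, Rinv_l, Rmult_1_r by lra.
  apply Rle_lt_trans with (C * (3 * INR N)); [apply Rmult_le_compat_l; lra|].
  apply Rlt_le_trans with (delta * ((c0 * INR N) ^ 2 / 4)); [|apply Rmult_le_compat_l; lra].
  replace (delta * ((c0 * INR N) ^ 2 / 4)) with ((c0 ^ 2 * delta * INR N) * INR N / 4) by field.
  nra.
Qed.

(** * The degenerate case D = 1: the only tree is the path *)

Lemma path_counts w : letters_le 1%nat w ->
  (occ w 0 + occ w 1 = length w /\ list_sum w = occ w 1)%nat.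
Proof.
  induction 1 as [|x w Hx _ [IH1 IH2]]; [auto|].
  rewrite !occ_cons. simpl. destruct x as [|[|]]; simpl; lia.
Qed.

(** On [T_N(1)] the frequencies of out-degrees 0 and 1 are [1/N] and
    [(N - 1)/N], at distance [1/N] from the unique point [(0, 1)] of [M]. *)
Lemma path_deviation N p t : in_TND 1 N t -> in_M 1 p -> deviation 1 N p t <= / INR N.
Proof.
  intros [Hs Ht] [_ [HM2 HM3]]. simpl in HM2, HM3.
  assert (Hp1 : p 1%nat = 1) by lra. assert (Hp0 : p 0%nat = 0) by lra.
  apply max_children_enc in Ht. destruct (path_counts _ Ht) as [Hc1 Hc2].
  assert (Hsum := list_sum_enc t). rewrite <- tsize_enc, Hs in *.
  assert (HN : 0 < INR N) by (apply lt_0_INR; lia).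
  assert (Hocc0 : occ (enc t) 0%nat = 1%nat) by lia.
  assert (Hocc1 : INR (occ (enc t) 1%nat) = INR N - 1)
    by (replace N with (occ (enc t) 1%nat + 1)%nat by lia; rewrite plus_INR; simpl; ring).
  rewrite deviation_enc. unfold word_deviation. simpl map. cbn [fold_right].
  rewrite Hocc0, Hocc1, Hp0, Hp1.
  replace (INR 1 / INR N - 0) with (/ INR N) by (simpl; field; lra).
  replace ((INR N - 1) / INR N - 1) with (- / INR N) by (field; lra).
  rewrite Rabs_Ropp, Rabs_pos_eq by (left; apply Rinv_0_lt_compat; auto).
  assert (0 < / INR N) by (apply Rinv_0_lt_compat; auto).
  repeat apply Rmax_lub; lra.
Qed.

(** For [D = 1] deviations beyond [eps] are impossible once [N > 1 / eps]. *)
Lemma case_D1 beta c pstar enum eps :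
  (forall N, enumerates 1 N (enum N)) -> is_minimizer_J 1 c beta pstar -> 0 < eps ->
  Un_cv (fun N => gibbs_prob 1 c beta (enum N) (fun t => Rgtb (deviation 1 N pstar t) eps)) 0.
Proof.
  intros Henum [HM _] He d Hd. destruct (INR_unbounded (/ eps)) as [N0 HN0].
  exists (S N0). intros N HN. unfold R_dist, gibbs_prob.
  assert (HNeps : / INR N < eps).
  { assert (0 < INR N) by (apply lt_0_INR; lia). assert (INR N0 < INR N) by (apply lt_INR; lia).
    apply (Rmult_lt_reg_l (INR N)); auto. rewrite Rinv_r by lra.
    apply (Rmult_lt_reg_l (/ eps)); [apply Rinv_0_lt_compat; auto|].
    replace (/ eps * (INR N * eps)) with (INR N) by (field; lra). lra. }
  change (sumR ?f ?l) with (sumL l f).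
  rewrite (sumL_ext _ _ (fun _ => 0)), sumL_zero.
  - unfold Rdiv. rewrite Rmult_0_l, Rminus_0_r, Rabs_R0. auto.
  - intros t Ht. apply Henum in Ht. assert (Hdev := path_deviation N pstar t Ht HM).
    unfold Rgtb. destruct (Rgt_dec (deviation 1 N pstar t) eps); [lra | auto].
Qed.

(** * The case D >= 2 *)

Lemma bad_terms_le (N K L : nat) lam theta : (L <= N)%nat -> 0 < lam ->
  (INR L + 1) * exp (INR L * theta) * exp (- lam * INR (K + 1)) +
  exp (- lam * (2 * INR K)) * exp (INR L * theta)
  <= (INR N + 2) * (exp (INR L * theta) * exp (- lam * INR K)).
Proof.
  intros HLN Hlam.
  assert (HL : 0 <= INR L <= INR N) by (split; [apply pos_INR | apply le_INR; auto]).
  assert (HK : 0 <= INR K) by apply pos_INR.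
  assert (Hhit : exp (- lam * INR (K + 1)) <= exp (- lam * INR K))
    by (apply exp_le_mono; rewrite plus_INR; simpl; nra).
  assert (Htop : exp (- lam * (2 * INR K)) <= exp (- lam * INR K)) by (apply exp_le_mono; nra).
  set (a := exp (INR L * theta)). set (x := exp (- lam * INR K)) in *.
  assert (Ha : 0 < a) by apply exp_pos.
  assert (H1 : (INR L + 1) * a * exp (- lam * INR (K + 1)) <= (INR N + 1) * a * x).
  { apply Rmult_le_compat; [| left; apply exp_pos | | auto].
    - apply Rmult_le_pos; lra.
    - apply Rmult_le_compat_r; lra. }
  assert (H2 : exp (- lam * (2 * INR K)) * a <= x * a) by (apply Rmult_le_compat_r; lra).
  lra.
Qed.

Lemma padding_exponent (N K L : nat) m lam : 4 <= m -> 0 < lam -> (L <= N)%nat ->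
  INR N < (INR K + 1) * m ->
  exp (INR L * (lam / (4 * m))) * exp (- lam * INR K) <= exp lam * exp (- (3 * lam / (4 * m)) * INR N).
Proof.
  intros Hm Hlam HLN HKm. rewrite <- !exp_plus. apply exp_le_mono.
  assert (HK : INR N / m - 1 <= INR K).
  { apply (Rmult_le_reg_r m); [lra|]. unfold Rdiv.
    rewrite Rmult_minus_distr_r, Rmult_assoc, Rinv_l by lra. lra. }
  assert (HL : INR L * (lam / (4 * m)) <= INR N * (lam / (4 * m))).
  { apply Rmult_le_compat_r; [left; apply Rdiv_lt_0_compat; lra | apply le_INR; auto]. }
  replace (INR N * (lam / (4 * m))) with (lam * (INR N / m) / 4) in HL by (field; lra).
  replace (- (3 * lam / (4 * m)) * INR N) with (- 3 * (lam * (INR N / m)) / 4) by (field; lra).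
  nra.
Qed.

Lemma good_mass_half D p m :
  isprob D p -> (1 <= D)%nat -> sumL (alphabet D) (fun x => p x * (INR x - 1)) = 0 ->
  (4 <= m)%nat ->
  exists N0, forall N, (N0 <= N)%nat ->
    / 2 <= sumL (words D (N - 4 * (N / m))) (fun u => if good (N / m) u then wprob p u else 0).
Proof.
  intros Hp HD Hmean Hm4.
  assert (Hm : 4 <= INR m) by (apply (le_INR 4) in Hm4; simpl in Hm4; lra).
  assert (HDr : 1 <= INR D) by (apply (le_INR 1); lia).
  set (lam := / (8 * INR m * INR D ^ 2)).
  assert (Hlam : 0 < lam) by (unfold lam; apply Rinv_0_lt_compat; nra).
  assert (HlamD : lam * INR D <= / 2).
  { unfold lam. replace (/ (8 * INR m * INR D ^ 2) * INR D) with (/ (8 * INR m * INR D))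
      by (field; lra).
    apply Rinv_le_contravar; nra. }
  assert (Htheta : 2 * lam ^ 2 * INR D ^ 2 = lam / (4 * INR m)) by (unfold lam; field; lra).
  set (c1 := 3 * lam / (4 * INR m)).
  destruct (linear_exp_small (2 * exp lam) c1 (/ 2)) as [N0 HN0];
    [assert (H := exp_pos lam); lra | unfold c1; apply Rdiv_lt_0_compat; lra | lra |].
  exists N0. intros N HN. specialize (HN0 N HN).
  set (K := (N / m)%nat).
  assert (HKm : INR N < (INR K + 1) * INR m).
  { assert (H := Nat.div_mod_eq N m). assert (H2 := Nat.mod_upper_bound N m ltac:(lia)).
    fold K in H. rewrite <- S_INR, <- mult_INR. apply lt_INR. nia. }
  assert (HG := good_mass D p K (N - 4 * K) lam Hp HD Hmean Hlam HlamD). rewrite Htheta in HG.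
  assert (Hbad := bad_terms_le N K (N - 4 * K) lam (lam / (4 * INR m)) ltac:(lia) Hlam).
  assert (Hexp := padding_exponent N K (N - 4 * K) (INR m) lam Hm Hlam ltac:(lia) HKm).
  fold c1 in Hexp.
  assert (HN2 : 0 <= INR N + 2) by (assert (H := pos_INR N); lra).
  apply Rmult_le_compat_l with (r := INR N + 2) in Hexp; [|exact HN2].
  lra.
Qed.

Lemma partition_subexp D p pi enum :
  isprob D p -> (2 <= D)%nat -> sumL (alphabet D) (fun x => p x * (INR x - 1)) = 0 ->
  (forall N, enumerates D N (enum N)) ->
  0 < pi -> pi <= p 0%nat -> pi <= p 1%nat -> pi <= p 2%nat ->
  forall r, 0 < r -> exists N0, forall N, (N0 <= N)%nat ->
    / 2 * exp (- r * INR N) <= sumL (enum N) (fun t => wprob p (enc t)).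
Proof.
  intros Hp HD Hmean Henum Hpi H0 H1 H2 r Hr.
  assert (Hlnpi : ln pi <= 0).
  { rewrite <- ln_1. assert (pi <= 1) by (assert (H := isprob_le1 D p 0 Hp ltac:(lia)); lra).
    destruct (Req_dec pi 1) as [->|E]; [lra | left; apply ln_increasing; lra]. }
  destruct (INR_unbounded (Rmax 4 (- 4 * ln pi / r))) as [m Hm].
  assert (Hm4 : 4 < INR m) by (eapply Rle_lt_trans; [apply Rmax_l | apply Hm]).
  assert (Hmpi : - 4 * ln pi < r * INR m).
  { assert (H := Rle_lt_trans _ _ _ (Rmax_r _ _) Hm).
    apply (Rmult_lt_compat_r r) in H; auto. unfold Rdiv in H.
    rewrite Rmult_assoc, Rinv_l, Rmult_1_r in H by lra. lra. }
  assert (Hm4n : (4 <= m)%nat) by (apply INR_le; simpl; lra).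
  destruct (good_mass_half D p m Hp ltac:(lia) Hmean Hm4n) as [N0 HN0].
  exists N0. intros N HN.
  set (K := (N / m)%nat).
  assert (HmK : (m * K <= N)%nat) by apply Nat.Div0.mul_div_le.
  assert (HKm : INR K * INR m <= INR N) by (rewrite <- mult_INR; apply le_INR; lia).
  assert (Hpow : exp (- r * INR N) <= pi ^ (4 * K)).
  { rewrite <- (exp_ln pi Hpi), <- exp_INR_mult. apply exp_le_mono.
    rewrite mult_INR. simpl INR.
    apply (Rmult_le_reg_r (INR m)); [lra|].
    assert (INR N * ln pi <= INR K * INR m * ln pi) by nra.
    assert (- 4 * ln pi * INR N <= r * INR m * INR N)
      by (apply Rmult_le_compat_r; [apply pos_INR | lra]).
    nra. }
  eapply Rle_trans; [|apply (partition_lower_bound D p pi N K (N - 4 * K)); auto; [nia | lra]].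
  rewrite (Rmult_comm (/ 2)).
  apply Rmult_le_compat; [left; apply exp_pos | lra | exact Hpow | apply HN0; auto].
Qed.

Lemma gibbs_prob_ratio D N a b beta c p l E :
  (forall k, (k <= D)%nat -> p k = exp (a + b * INR k - beta * c k)) -> enumerates D N l ->
  gibbs_prob D c beta l E =
  sumL l (fun t => if E t then wprob p (enc t) else 0) / sumL l (fun t => wprob p (enc t)).
Proof.
  intros Hp [_ Hl].
  set (CN := exp (- (a * INR N + b * (INR N - 1)))).
  assert (HW : forall t, In t l -> weight D c beta t = CN * wprob p (enc t)).
  { intros t Ht. apply Hl in Ht as [Hs Ht]. rewrite (weight_factor D a b beta c p), Hs; auto. }
  unfold gibbs_prob. change (sumR ?f ?g) with (sumL g f). change (sumR ?f ?g) with (sumL g f).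
  rewrite (sumL_ext l (weight D c beta) _ HW).
  rewrite (sumL_ext l _ (fun t => CN * (if E t then wprob p (enc t) else 0)))
    by (intros t Ht; rewrite HW by auto; destruct (E t); ring).
  rewrite !sumL_scal. unfold Rdiv. rewrite Rinv_mult.
  assert (0 < CN) by apply exp_pos.
  replace (CN * sumL l (fun t => if E t then wprob p (enc t) else 0) *
           (/ CN * / sumL l (fun t => wprob p (enc t))))
    with (CN * / CN * (sumL l (fun t => if E t then wprob p (enc t) else 0) *
                       / sumL l (fun t => wprob p (enc t)))) by ring.
  rewrite Rinv_r by lra. ring.
Qed.

Lemma ratio_bound A B C E : 0 <= C -> A <= C * (E * E) -> / 2 * E <= B -> 0 < E ->
  A / B <= 2 * C * E.
Proof.
  intros HC HA HB HE.
  apply (Rmult_le_reg_r B); [lra|]. unfold Rdiv. rewrite Rmult_assoc, Rinv_l, Rmult_1_r by lra.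
  assert (2 * C * E * (/ 2 * E) <= 2 * C * E * B)
    by (apply Rmult_le_compat_l; [apply Rmult_le_pos; lra | auto]).
  replace (2 * C * E * (/ 2 * E)) with (C * (E * E)) in H by field. lra.
Qed.

Lemma in_M_centred D p : in_M D p ->
  isprob D p /\ sumL (alphabet D) (fun x => p x * (INR x - 1)) = 0.
Proof.
  intros [HM1 [HM2 HM3]]. split.
  - split; [intros; apply HM1; auto | rewrite <- sum_f_R0_sumL; auto].
  - rewrite (sumL_ext _ _ (fun x => INR x * p x - p x)) by (intros; ring).
    rewrite sumL_minus, <- !sum_f_R0_sumL, HM2, HM3. ring.
Qed.

Lemma deviation_prob_decay D beta c pstar enum eps : (2 <= D)%nat ->
  (forall N, enumerates D N (enum N)) -> is_minimizer_J D c beta pstar -> 0 < eps ->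
  exists r N1, 0 < r /\ forall N, (N1 <= N)%nat ->
    0 <= gibbs_prob D c beta (enum N) (fun t => Rgtb (deviation D N pstar t) eps)
      <= 4 * INR (S D) * exp (- r * INR N).
Proof.
  intros HD Henum Hmin He.
  destruct (minimiser_exponential D beta c pstar HD Hmin) as [a [b Hab]].
  destruct (in_M_centred D pstar (proj1 Hmin)) as [Hp Hmean].
  assert (Hpos : forall k, (k <= D)%nat -> 0 < pstar k) by (intros; rewrite Hab; auto; apply exp_pos).
  set (pi := Rmin (pstar 0%nat) (Rmin (pstar 1%nat) (pstar 2%nat))).
  assert (Hpi : 0 < pi) by (apply Rmin_pos; [|apply Rmin_pos]; apply Hpos; lia).
  destruct (deviating_words_decay D pstar eps Hp He) as [r [Hr Hnum]].
  destruct (partition_subexp D pstar pi enum Hp HD Hmean Henum Hpi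
              (Rmin_l _ _) (Rle_trans _ _ _ (Rmin_r _ _) (Rmin_l _ _))
              (Rle_trans _ _ _ (Rmin_r _ _) (Rmin_r _ _)) (r / 2) ltac:(lra)) as [N1 HN1].
  exists (r / 2), (max N1 1). split; [lra|]. intros N HN.
  rewrite (gibbs_prob_ratio D N a b beta c pstar) by auto.
  set (A := sumL (enum N) _). set (B := sumL (enum N) _). set (E := exp (- (r / 2) * INR N)).
  assert (HE : 0 < E) by apply exp_pos.
  assert (HA : A <= 2 * INR (S D) * (E * E)).
  { replace (E * E) with (exp (- r * INR N)) by (unfold E; rewrite <- exp_plus; f_equal; field).
    eapply Rle_trans; [apply deviating_trees_le_words; auto | apply Hnum; lia]. }
  assert (HA0 : 0 <= A).
  { apply sumL_nonneg. intros t Ht. apply Henum in Ht as [_ Ht]. apply max_children_enc in Ht.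
    destruct Rgtb; [apply (wprob_nonneg D); auto | lra]. }
  assert (HB : / 2 * E <= B) by (apply HN1; lia).
  split.
  - unfold Rdiv. apply Rmult_le_pos; [auto | left; apply Rinv_0_lt_compat; lra].
  - replace (4 * INR (S D)) with (2 * (2 * INR (S D))) by ring.
    apply ratio_bound; auto. assert (H := pos_INR (S D)). lra.
Qed.

Lemma case_D2 D beta c pstar enum eps : (2 <= D)%nat ->
  (forall N, enumerates D N (enum N)) -> is_minimizer_J D c beta pstar -> 0 < eps ->
  Un_cv (fun N => gibbs_prob D c beta (enum N) (fun t => Rgtb (deviation D N pstar t) eps)) 0.
Proof.
  intros HD Henum Hmin He delta Hdelta.
  destruct (deviation_prob_decay D beta c pstar enum eps HD Henum Hmin He) as [r [N1 [Hr Hbound]]].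
  destruct (linear_exp_small (4 * INR (S D)) r delta) as [N2 HN2];
    [assert (H := pos_INR (S D)); lra | auto | auto |].
  exists (max N1 N2). intros N HN. unfold R_dist. rewrite Rminus_0_r.
  destruct (Hbound N ltac:(lia)) as [H0 H1]. rewrite Rabs_pos_eq by auto.
  eapply Rle_lt_trans; [|apply (HN2 N); lia].
  assert (0 <= 4 * INR (S D) * exp (- r * INR N))
    by (apply Rmult_le_pos; [assert (H := pos_INR (S D)); lra | left; apply exp_pos]).
  assert (0 <= INR N) by apply pos_INR. nra.
Qed.

Theorem corollary2 (D : nat) (beta : R) (c : nat -> R) (pstar : nat -> R)
  (enum : nat -> list tree) :
  (1 <= D)%nat -> 0 < beta ->
  (forall N, enumerates D N (enum N)) ->
  is_minimizer_J D c beta pstar ->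
  forall eps : R, 0 < eps ->
    Un_cv (fun N => gibbs_prob D c beta (enum N)
                      (fun t => Rgtb (deviation D N pstar t) eps)) 0.
Proof.
  intros HD _ Henum Hmin eps He.
  destruct (Nat.eq_dec D 1) as [->|HD2].
  - apply case_D1; auto.
  - apply case_D2; auto. lia.
Qed.
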